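(* Let $K_1,K_2$ be nonempty finite simplicial complexes (each having at least one vertex) on disjoint vertex sets, let $i\ge 0$, and let $K=K_1*K_2$ be their join. If $\dim K_1+\dim K_2\ge i+1$, then $B_i(K)$ is unbalanced.
   Context: The join $K_1*K_2$ is the complex on $V(K_1)\cup V(K_2)$ whose faces are $F_1\cup F_2$ with $F_1\in K_1$, $F_2\in K_2$. The dimension of a complex is the maximum of $|F|-1$ over its faces. $S_j(K)$ is the set of faces of cardinality $j+1$. For an oriented complex $K$ (orientation: ordering of each face up to even permutations), $B_i(K)$ is the signed bipartite graph on $S_i(K)\cup S_{i+1}(K)$ with edges $\{G,\bar G\}$ for $G\subset\bar G$, signed by the boundary incidence sign $\mathrm{sgn}([G],\partial[\bar G])\in\{\pm1\}$ ($(-1)^j$ if $G$ is $\bar G$ minus its $j$-th vertex with agreeing orientation, negated otherwise). A signed graph is balanced if every cycle has positive sign product; this property of $B_i(K)$ is independent of the orientation. *)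

From mathcomp Require Import all_boot.
Set Implicit Arguments. Unset Strict Implicit. Unset Printing Implicit Defensive.

Section SC.
Variable V : finType.

Definition is_complex (K : {set {set V}}) : Prop :=
  set0 \in K /\ (forall F G : {set V}, F \in K -> G \subset F -> G \in K).

Definition vertices (K : {set {set V}}) : {set V} := \bigcup_(F in K) F.

Definition has_vertex (K : {set {set V}}) : Prop := exists v : V, [set v] \in K.

Definition join (K1 K2 : {set {set V}}) : {set {set V}} :=
  [set F1 :|: F2 | F1 in K1, F2 in K2].

(* dimension: max |F| - 1 over faces (a nat; meaningful when K has a vertex) *)
Definition dim (K : {set {set V}}) : nat := (\max_(F in K) #|F|).-1.

Definition faces_of_size (j : nat) (K : {set {set V}}) : {set {set V}} :=
  [set F in K | #|F| == j.+1].

(* An orientation of K: an ordering of the vertices of each face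
   (considered up to even permutations, see [agree]). *)
Definition is_orientation (K : {set {set V}}) (ord : {set V} -> seq V) : Prop :=
  forall F, F \in K -> perm_eq (ord F) (enum F).

Definition inv_count (s t : seq V) : nat :=
  #|[set p : V * V | [&& p.1 \in s, p.2 \in s,
                        index p.1 s < index p.2 s & index p.2 t < index p.1 t]]|.

(* two orderings of the same set define the same orientation
   (they differ by an even permutation) *)
Definition agree (s t : seq V) : bool := ~~ odd (inv_count s t).

(* boundary incidence sign sgn([G], d[Gbar]) for G = Gbar minus one vertex,
   encoded as a boolean: true means sign -1.
   If v is the j-th vertex of Gbar (0-based) in its orientation, the sign is
   (-1)^j when the induced ordering of G agrees with ord G, and -(-1)^j otherwise. *)
Definition incid_neg (ord : {set V} -> seq V) (G Gbar : {set V}) : bool :=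
  [exists v : V, [&& v \in Gbar, G == Gbar :\ v &
     odd (index v (ord Gbar)) (+) ~~ agree (rem v (ord Gbar)) (ord G)]].

Definition Badj (K : {set {set V}}) (i : nat) (F H : {set V}) : bool :=
  ((F \in faces_of_size i K) && (H \in faces_of_size i.+1 K) && (F \subset H)) ||
  ((H \in faces_of_size i K) && (F \in faces_of_size i.+1 K) && (H \subset F)).

(* sign of the edge {F,H} of B_i(K) (true = negative) *)
Definition Bneg (ord : {set V} -> seq V) (K : {set {set V}}) (i : nat)
    (F H : {set V}) : bool :=
  if F \in faces_of_size i K then incid_neg ord F H else incid_neg ord H F.

(* B_i(K) (with orientation ord) is balanced: every cycle (a closed walk
   through at least 3 pairwise distinct vertices) has positive sign product,
   i.e. an even number of negative edges. *)
Definition balanced (K : {set {set V}}) (i : nat) (ord : {set V} -> seq V) : Prop :=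
  forall c : seq {set V}, uniq c -> 3 <= size c -> cycle (Badj K i) c ->
    ~~ odd (count (fun F => Bneg ord K i F (next c F)) c).

End SC.

From mathcomp Require Import all_boot.
Set Implicit Arguments. Unset Strict Implicit. Unset Printing Implicit Defensive.

(* Maximal faces of K1 and K2 are disjoint, so the join contains the full simplex on
   dim K1 + dim K2 + 2 >= i + 3 vertices.  Pick three of them, a, b, c, and an i-set R
   of others: the faces aR, abR, bR, bcR, cR, caR form a 6-cycle of B_i.  Measured
   against the reference orders (z, R) and (z, w, R), each incidence sign factors as
   eps(Gbar) (-1)^j eps(G), where j is the position of the removed vertex, so the
   eps's cancel around the cycle and what is left is (-1) for each of the three edges
   zR < zwR: the cycle is negative. *)

Lemma map_next_pairmap (T : eqType) (U : Type) (f : T -> T -> U) (x : T) (p : seq T) :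
  uniq (x :: p) ->
  [seq f y (next (x :: p) y) | y <- x :: p] = pairmap f x (rcons p x).
Proof.
move=> up; apply: (@eq_from_nth _ (f x x)) => [|k].
  by rewrite size_map size_pairmap size_rcons.
rewrite size_map => lt_k.
rewrite (nth_map x) // (nth_pairmap x) ?size_rcons // -rcons_cons nth_rcons lt_k.
rewrite next_nth mem_nth // index_uniq //= nth_rcons.
move: lt_k; rewrite /= ltnS leq_eqVlt => /orP[/eqP ->|->] //.
by rewrite ltnn eqxx [nth _ p _]nth_default.
Qed.

Lemma count_next_pairmap (T : eqType) (f : T -> T -> bool) (x : T) (p : seq T) :
  uniq (x :: p) ->
  count (fun y => f y (next (x :: p) y)) (x :: p) = count id (pairmap f x (rcons p x)).
Proof. by move=> up; rewrite -map_next_pairmap // count_map. Qed.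

Lemma odd_card_addb (T : finType) (A : {set T}) :
  odd #|A| = \big[addb/false]_(x : T) (x \in A).
Proof.
rewrite -sum1_card (big_morph odd oddD (erefl (odd 0))) [RHS](bigID (mem A)) /=.
rewrite [X in _ = _ (+) X]big1 ?addbF; last by move=> p /negbTE.
by apply: eq_bigr => p ->.
Qed.

Section InversionParity.
Variable V : finType.
Implicit Types (s t u : seq V) (v x y : V).

Definition before s x y := index x s < index y s.

Definition discord s t x y := [&& x \in s, y \in s & before s x y != before t x y].

(* [ranked] selects one ordered pair out of each unordered pair of distinct elements. *)
Definition ranked (p : V * V) := enum_rank p.1 < enum_rank p.2.

Definition inv_parity s t := \big[addb/false]_(p | ranked p) discord s t p.1 p.2.

Lemma before_swap s x y : x \in s -> y \in s -> x != y -> before s y x = ~~ before s x y.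
Proof.
move=> xs ys nxy; rewrite /before ltn_neqAle -leqNgt; case: eqP => //= E.
by case/eqP: nxy; rewrite -(nth_index x xs) -(nth_index x ys) E.
Qed.

Lemma ranked_neq p : ranked p -> p.1 != p.2.
Proof. by rewrite /ranked; apply: contraTneq => ->; rewrite ltnn. Qed.

Lemma ranked_swap x y : x != y -> ranked (y, x) = ~~ ranked (x, y).
Proof.
move=> nxy; rewrite /ranked /= ltn_neqAle -leqNgt.
by case: eqP => // /ord_inj/enum_rank_inj eyx; rewrite eyx eqxx in nxy.
Qed.

Lemma discord_sym s t x y : perm_eq s t -> discord s t x y = discord s t y x.
Proof.
move=> st; have [-> //|nxy] := eqVneq x y; rewrite /discord.
case xs: (x \in s); case ys: (y \in s) => //=.
have [xt yt] : x \in t /\ y \in t by rewrite -!(perm_mem st).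
by rewrite (before_swap xs ys) ?(before_swap xt yt) // (inj_eq negb_inj).
Qed.

Lemma odd_inv_count s t : perm_eq s t -> odd (inv_count s t) = inv_parity s t.
Proof.
move=> st; rewrite /inv_count odd_card_addb (bigID ranked) /=.
have swapK : involutive (fun p : V * V => (p.2, p.1)) by case.
rewrite [X in _ (+) X](reindex_inj (inv_inj swapK)) /=.
rewrite [X in _ (+) X](bigID (fun p : V * V => p.1 == p.2)) /=.
rewrite [X in _ (+) (X (+) _)]big1 => [|[x y] /andP[_ /eqP /= ->]]; last first.
  by rewrite inE /before ltnn !andbF.
rewrite addFb [X in _ (+) X](eq_bigl ranked) => [|[x y] /=]; last first.
  have [-> | nxy] := eqVneq x y; first by rewrite andbF /ranked ltnn.
  by rewrite ranked_swap // negbK andbT.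
rewrite -big_split; apply: eq_bigr => [[x y]] /ranked_neq /= nxy; rewrite !inE /= /discord.
case xs: (x \in s); case ys: (y \in s) => //=.
have [xt yt] : x \in t /\ y \in t by rewrite -!(perm_mem st).
move: (before_swap xs ys nxy) (before_swap xt yt nxy); rewrite /before => -> ->.
by case: (index x s < index y s); case: (index x t < index y t).
Qed.

Lemma inv_parity_trans s t u : perm_eq s t ->
  inv_parity s u = inv_parity s t (+) inv_parity t u.
Proof.
move=> st; rewrite -big_split; apply: eq_bigr => [[x y]] _.
rewrite /discord -!(perm_mem st) /=.
case: (x \in s); case: (y \in s) => //=.
by case: (before s x y); case: (before t x y); case: (before u x y).
Qed.

Lemma before_rem s v x y : x != v -> y != v -> before (rem v s) x y = before s x y.
Proof.
move=> xv yv; rewrite /before; elim: s => //= w s IH.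
have [->|_] := eqVneq w v; first by rewrite /= !(eq_sym v) (negbTE xv) (negbTE yv) ltnS.
by rewrite /=; case: (w == x); case: (w == y).
Qed.

Lemma odd_index s v : uniq s -> v \in s ->
  \big[addb/false]_(x | x != v) ((x \in s) && before s x v) = odd (index v s).
Proof.
move=> us vs.
rewrite -[index v s](size_takel (index_size v s)) -(card_uniqP (take_uniq _ us)).
rewrite -cardsE odd_card_addb [RHS](bigID (fun x => x != v)) /=.
rewrite [X in _ = _ (+) X]big1 ?addbF => [|x /negPn /eqP ->]; last first.
  by rewrite inE in_take // ltnn.
apply: eq_bigr => x _; rewrite inE.
by case xs: (x \in s); [rewrite in_take | apply/esym/negbTE; apply: contraFN xs => /mem_take].
Qed.

Lemma big_ranked_through v (F : V -> V -> bool) : (forall x, F v x = F x v) ->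
  \big[addb/false]_(p | ranked p && ((p.1 == v) || (p.2 == v))) F p.1 p.2 =
  \big[addb/false]_(x | x != v) F x v.
Proof.
move=> Fsym; rewrite (bigID (fun p : V * V => p.1 == v)) [RHS](bigID (fun x => ranked (x, v))).
rewrite /= addbC; congr addb.
  transitivity (\big[addb/false]_(x | (x != v) && ranked (x, v))
                \big[addb/false]_(y | y == v) F x y).
    rewrite pair_big_dep; apply: eq_bigl => [[x y]] /=.
    by have [->|yv] := eqVneq y v; have [->|xv] := eqVneq x v; rewrite ?andbF ?andbT ?orbF.
  by apply: eq_bigr => x _; rewrite big_pred1_eq.
transitivity (\big[addb/false]_(x | x == v) \big[addb/false]_(y | ranked (x, y)) F x y).
  rewrite pair_big_dep; apply: eq_bigl => [[x y]] /=.
  by have [->|xv] := eqVneq x v; rewrite ?andbF ?andbT ?orbT.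
rewrite big_pred1_eq; apply: eq_big => [x|x _]; last exact: Fsym.
have [->|xv] := eqVneq x v; first by rewrite /ranked ltnn.
by rewrite (ranked_swap xv).
Qed.

Lemma inv_parity_rem s t v : uniq s -> v \in s -> perm_eq s t ->
  inv_parity s t = odd (index v s) (+) odd (index v t) (+) inv_parity (rem v s) (rem v t).
Proof.
move=> us vs st; have ut : uniq t by rewrite -(perm_uniq st).
have vt : v \in t by rewrite -(perm_mem st).
set through_v := fun p : V * V => (p.1 == v) || (p.2 == v).
rewrite /inv_parity (bigID through_v) [in RHS](bigID through_v) /=.
rewrite [X in _ = _ (+) (X (+) _)]big1 ?addFb => [|[x y] /andP[_] /orP[] /eqP /= ->].
2,3: by rewrite /discord mem_rem_uniqF ?andbF.
rewrite {}/through_v; congr addb; last first.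
  apply: eq_bigr => [[x y]] /andP[_]; rewrite negb_or => /andP[xv yv] /=.
  by rewrite /discord !mem_rem_uniq // !inE xv yv !before_rem.
have split_v x :
    discord s t x v = ((x \in s) && before s x v) (+) ((x \in t) && before t x v).
  rewrite /discord vs (perm_mem st) /=.
  by case: (x \in t); case: (before s x v); case: (before t x v).
rewrite big_ranked_through => [|x]; last exact: discord_sym.
by rewrite (eq_bigr _ (fun x _ => split_v x)) big_split /= !odd_index.
Qed.
End InversionParity.

Section Incidence.
Variables (V : finType) (ord : {set V} -> seq V).

Lemma incid_negE (G B : {set V}) v : v \in B -> G = B :\ v ->
  incid_neg ord G B = odd (index v (ord B)) (+) ~~ agree (rem v (ord B)) (ord G).
Proof.
move=> vB ->; apply/existsP/idP => [[w /and3P[wB /eqP GE]] | sign_v]; last first.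
  by exists v; rewrite vB eqxx.
suff -> : w = v by [].
apply/eqP; apply: contraT => wv.
by have := setD11 w B; rewrite -GE !inE wv wB.
Qed.

Lemma incid_neg_ref (G B : {set V}) v cB : v \in B -> G = B :\ v ->
  perm_eq cB (enum B) -> perm_eq (ord B) (enum B) -> perm_eq (ord G) (enum G) ->
  incid_neg ord G B =
  inv_parity (ord B) cB (+) odd (index v cB) (+) inv_parity (rem v cB) (ord G).
Proof.
move=> vB GE cB_B oB oG.
have oBc : perm_eq (ord B) cB by rewrite (perm_trans oB) // perm_sym.
have [uB ucB] : uniq (ord B) /\ uniq cB by rewrite (perm_uniq oB) (perm_uniq cB_B) enum_uniq.
have vo : v \in ord B by rewrite (perm_mem oB) mem_enum.
have remB : perm_eq (rem v (ord B)) (rem v cB).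
  apply: uniq_perm; rewrite ?rem_uniq // => x.
  by rewrite !mem_rem_uniq // !inE (perm_mem oBc).
have remG : perm_eq (rem v cB) (ord G).
  apply: uniq_perm; rewrite ?rem_uniq ?(perm_uniq oG) ?enum_uniq // => x.
  by rewrite mem_rem_uniq // (perm_mem oG) mem_enum GE !inE (perm_mem cB_B) mem_enum.
rewrite (incid_negE vB GE) /agree negbK odd_inv_count; last exact: perm_trans remB remG.
rewrite (inv_parity_trans _ remB) (inv_parity_rem uB vo oBc).
by case: (odd _); case: (odd _); case: (inv_parity _ _); case: (inv_parity _ _).
Qed.

Lemma Badj_subset (K : {set {set V}}) i (F H : {set V}) :
  F \in faces_of_size i K -> H \in faces_of_size i.+1 K -> F \subset H ->
  Badj K i F H /\ Badj K i H F.
Proof. by move=> SF SH sFH; rewrite /Badj SF SH sFH /= orbT. Qed.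
End Incidence.

Section Hexagon.
Variables (V : finType) (K : {set {set V}}) (i : nat) (ord : {set V} -> seq V).
Variables (T R : {set V}).
Hypothesis ord_K : is_orientation K ord.
Hypothesis simplex_T : forall F : {set V}, F \subset T -> F \in K.
Hypotheses (R_T : R \subset T) (card_R : #|R| = i).

Let twist z := inv_parity (z :: enum R) (ord (z |: R)).

Lemma wedge z w : z \in T -> w \in T -> z != w -> z \notin R -> w \notin R ->
  [/\ Badj K i (z |: R) (z |: (w |: R)), Badj K i (z |: (w |: R)) (w |: R) &
      Bneg ord K i (z |: R) (z |: (w |: R)) (+) Bneg ord K i (z |: (w |: R)) (w |: R)
      = ~~ (twist z (+) twist w)].
Proof.
move=> zT wT zw zR wR; set B := z |: (w |: R).
have inK (F : {set V}) : F \subset B -> F \in K.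
  by move=> sFB; apply/simplex_T/(subset_trans sFB); rewrite !subUset !sub1set zT wT R_T.
have card1 x : x \notin R -> #|x |: R| = i.+1 by move=> xR; rewrite cardsU1 xR card_R.
have cardB : #|B| = i.+2 by rewrite cardsU1 !inE negb_or zw zR card1.
have sub_z : z |: R \subset B by rewrite setUS ?subsetUr.
have sub_w : w |: R \subset B by rewrite subsetUr.
have Sz : z |: R \in faces_of_size i K by rewrite inE card1 // eqxx inK.
have Sw : w |: R \in faces_of_size i K by rewrite inE card1 // eqxx inK.
have SB : B \in faces_of_size i.+1 K by rewrite inE cardB eqxx inK.
have nSB : B \notin faces_of_size i K by rewrite inE cardB (gtn_eqF (ltnSn _)) andbF.
have cB_B : perm_eq [:: z, w & enum R] (enum B).
  apply: uniq_perm => [|| x]; last by rewrite !inE !mem_enum !inE.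
    by rewrite /= !inE !mem_enum negb_or zw zR wR enum_uniq.
  exact: enum_uniq.
have Bz : z |: R = B :\ w by rewrite /B setUCA setU1K // !inE negb_or eq_sym zw wR.
have Bw : w |: R = B :\ z by rewrite /B setU1K // !inE negb_or zw zR.
have [adj_z _] := Badj_subset Sz SB sub_z.
have [_ adj_w] := Badj_subset Sw SB sub_w.
split=> //; rewrite /Bneg Sz (negbTE nSB).
have wB : w \in B by rewrite !inE eqxx orbT.
rewrite (incid_neg_ref wB Bz cB_B) ?ord_K ?inK //.
rewrite (incid_neg_ref (setU11 z _) Bw cB_B) ?ord_K ?inK //= !eqxx (negbTE zw) /=.
by rewrite /twist; case: (inv_parity _ _); case: (inv_parity _ _); case: (inv_parity _ _).
Qed.

Lemma hexagon_unbalanced a b c : a \in T -> b \in T -> c \in T ->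
  a != b -> b != c -> c != a -> a \notin R -> b \notin R -> c \notin R ->
  ~ balanced K i ord.
Proof.
move=> aT bT cT ab bc ca aR bR cR bal.
have [ab1 ab2 ab_sign] := wedge aT bT ab aR bR.
have [bc1 bc2 bc_sign] := wedge bT cT bc bR cR.
have [ca1 ca2 ca_sign] := wedge cT aT ca cR aR.
have hex_uniq : uniq [:: a |: R; a |: (b |: R); b |: R; b |: (c |: R); c |: R; c |: (a |: R)].
  apply: (@map_uniq _ _ (fun F : {set V} => (a \in F, b \in F, c \in F))).
  have neq := (negbTE ab, negbTE bc, negbTE ca, negbTE aR, negbTE bR, negbTE cR).
  by rewrite /= !inE !eqxx !neq ![b == a]eq_sym ![c == b]eq_sym ![a == c]eq_sym !neq.
have := bal _ hex_uniq isT; rewrite count_next_pairmap //= ab1 ab2 bc1 bc2 ca1 ca2 => /(_ isT).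
rewrite !oddD !oddb addbF addbA ab_sign [X in _ (+) X]addbA bc_sign ca_sign.
by case: (twist a); case: (twist b); case: (twist c).
Qed.
End Hexagon.

Section Complexes.
Variable V : finType.
Implicit Types (K : {set {set V}}) (F G T : {set V}).

Lemma simplex_unbalanced K i (ord : {set V} -> seq V) T :
  is_orientation K ord -> (forall F, F \subset T -> F \in K) -> i.+3 <= #|T| ->
  ~ balanced K i ord.
Proof.
move=> ord_K simplex_T /card_geqP[[|a [|b [|c r]]] [] //= uniq_abcr [size_r] sub_T].
move: uniq_abcr; rewrite !inE !negb_or => /and4P[/and3P[ab ac ar] /andP[bc br] cr ur].
have R_T : [set x in r] \subset T.
  by apply/subsetP => x; rewrite inE => xr; apply: sub_T; rewrite !inE xr !orbT.
have card_R : #|[set x in r]| = i by rewrite cardsE (card_uniqP ur).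
have [aT bT cT] : [/\ a \in T, b \in T & c \in T].
  by split; apply: sub_T; rewrite !inE eqxx ?orbT.
apply: (hexagon_unbalanced ord_K simplex_T R_T card_R aT bT cT ab bc);
  by rewrite ?inE // eq_sym.
Qed.

Lemma join_face K1 K2 F1 F2 G : is_complex K1 -> is_complex K2 ->
  F1 \in K1 -> F2 \in K2 -> G \subset F1 :|: F2 -> G \in join K1 K2.
Proof.
move=> [_ closed_K1] [_ closed_K2] F1K F2K sub_G; apply/imset2P.
exists (G :&: F1) (G :&: F2).
- exact: closed_K1 F1K (subsetIr _ _).
- exact: closed_K2 F2K (subsetIr _ _).
- by rewrite -setIUr; apply/esym/setIidPl.
Qed.

Lemma exists_face_dim K : is_complex K -> has_vertex K ->
  exists2 F, F \in K & #|F| = (dim K).+1.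
Proof.
move=> [K0 _] [v Kv].
have [|F FK maxF] := @eq_bigmax_cond _ (mem K) (fun F : {set V} => #|F|).
  by rewrite card_gt0; apply/set0Pn; exists set0.
exists F => //; rewrite /dim maxF prednK //.
by have := @leq_bigmax_cond _ (mem K) (fun F : {set V} => #|F|) _ Kv; rewrite maxF cards1.
Qed.
End Complexes.

Theorem mainTheorem9 (V : finType) (K1 K2 : {set {set V}}) (i : nat) :
  is_complex K1 -> is_complex K2 ->
  has_vertex K1 -> has_vertex K2 ->
  [disjoint vertices K1 & vertices K2] ->
  i.+1 <= dim K1 + dim K2 ->
  forall ord : {set V} -> seq V, is_orientation (join K1 K2) ord ->
    ~ balanced (join K1 K2) i ord.
Proof.
move=> cK1 cK2 vK1 vK2 disj_K dim_K ord ord_K.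
have [F1 F1K card_F1] := exists_face_dim cK1 vK1.
have [F2 F2K card_F2] := exists_face_dim cK2 vK2.
apply: (simplex_unbalanced ord_K (T := F1 :|: F2)) => [G|]; first exact: join_face.
have disj_F : [disjoint F1 & F2] by apply: disjointW disj_K; apply: bigcup_sup.
have /eqP -> : #|F1 :|: F2| == #|F1| + #|F2| by rewrite (leq_card_setU F1 F2).2.
by rewrite card_F1 card_F2 addSn addnS !ltnS.
Qed.
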